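(* For all integers $b>0$ and $n>0$, $\sum_{i=0}^{n}\Big(2^{bi}\prod_{j=i}^{n}(1-2^j)\Big)<0.$ *)

From mathcomp Require Import all_boot all_order all_algebra.

From mathcomp Require Import all_boot all_order all_algebra.
From mathcomp Require Import ring zify.
Set Implicit Arguments.
Unset Strict Implicit.

Import Order.TTheory GRing.Theory Num.Theory.
Local Open Scope ring_scope.

(* Put x = q^b and S_n = \sum_(i <= n) x^i \prod_(i <= j <= n) (1 - q^j).  Peeling
   off the last factor gives S_(n+1) = (1 - q^(n+1)) (S_n + x^(n+1)), so
   S_n = (1 - q^n) x g_b(n) with g_b(0) = 1, g_b(n+1) = x^n - (q^n - 1) g_b(n).
   This recursion alternates in sign, but comparing exponents b and b+1 gives
   g_(b+1)(n+1) = q^(nb) + (q^n - 1)(q^b - 1) g_b(n), whose terms are all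
   nonnegative when q >= 1; hence g_b(n) > 0 for b > 0, and S_n < 0 once q > 1
   and n > 0. *)

Section QSum.

Variable R : comPzRingType.
Implicit Types q : R.

Fixpoint reduced_qsum q (b n : nat) : R :=
  if n is n'.+1 then q ^+ (b * n') - (q ^+ n' - 1) * reduced_qsum q b n'
  else 1.

Lemma reduced_qsumS q b n :
  reduced_qsum q b n.+1 = q ^+ (b * n) - (q ^+ n - 1) * reduced_qsum q b n.
Proof. by []. Qed.

Lemma reduced_qsumSS q b n :
  reduced_qsum q b.+1 n.+1 =
    q ^+ (n * b) + (q ^+ n - 1) * (q ^+ b - 1) * reduced_qsum q b n.
Proof.
elim: n => [|n IH]; first by rewrite /= !expr0 muln0 subrr !mul0r subr0 addr0.
rewrite (reduced_qsumS _ b.+1 n.+1) IH reduced_qsumS.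
have -> : q ^+ (b.+1 * n.+1) = q ^+ (n * b) * q ^+ b * q ^+ n * q.
  by rewrite -!exprD -exprSr; congr (_ ^+ _); lia.
by rewrite mulSn exprD mulnC exprS; ring.
Qed.

Lemma qsum_reduced q b n :
  \sum_(0 <= i < n.+1) q ^+ (b * i) * \prod_(i <= j < n.+1) (1 - q ^+ j)
  = (1 - q ^+ n) * q ^+ b * reduced_qsum q b n.
Proof.
elim: n => [|n IH]; first by rewrite !big_nat1 expr0 subrr mulr0 !mul0r.
rewrite big_nat_recr // big_nat1.
rewrite (eq_big_nat _ _ (F2 := fun i => q ^+ (b * i) *
    \prod_(i <= j < n.+1) (1 - q ^+ j) * (1 - q ^+ n.+1))); last first.
  by move=> i /andP [_ lt_in]; rewrite big_nat_recr ?mulrA // ltnW.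
rewrite reduced_qsumS -big_distrl /= IH mulnS exprD.
ring.
Qed.

End QSum.

Lemma reduced_qsum_gt0 (R : realDomainType) (q : R) (b n : nat) :
  1 <= q -> (0 < b)%N -> 0 < reduced_qsum q b n.
Proof.
move=> q_ge1; elim: n b => [|n IH] [|b] // _.
rewrite reduced_qsumSS ltr_wpDr ?exprn_gt0 ?(lt_le_trans ltr01) //.
case: b => [|b]; first by rewrite expr0 subrr mulr0 mul0r.
by rewrite !mulr_ge0 ?subr_ge0 ?exprn_ege1 // ltW ?IH.
Qed.

Lemma qsum_lt0 (R : realDomainType) (q : R) (b n : nat) :
  1 < q -> (0 < b)%N -> (0 < n)%N ->
  \sum_(0 <= i < n.+1) q ^+ (b * i) * \prod_(i <= j < n.+1) (1 - q ^+ j) < 0.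
Proof.
move=> q_gt1 b_gt0 n_gt0; rewrite qsum_reduced.
have q_gt0 : 0 < q by apply: lt_trans q_gt1.
rewrite pmulr_llt0 ?reduced_qsum_gt0 ?ltW // pmulr_llt0 ?exprn_gt0 //.
by rewrite subr_lt0 exprn_egt1 // -lt0n.
Qed.

Theorem lemma3 (b n : nat) (hb : (0 < b)%N) (hn : (0 < n)%N) :
  \sum_(0 <= i < n.+1) ((2 : int) ^+ (b * i) *
     \prod_(i <= j < n.+1) (1 - (2 : int) ^+ j)) < 0.
Proof. exact: qsum_lt0. Qed.
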